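(* Let $n\ge3$ and let $c=(c_1,\ldots,c_n)\in\{0,1,2\}^n$ be a stable configuration on the wheel graph $W_n$. (1) $c$ is SSM-recurrent if and only if for all $i,j\in[n]$ (not necessarily distinct) with $c_i=c_j=0$ there exists $k\in(i,j)$ with $c_k=2$. (2) $c$ is ASM-recurrent if and only if $c$ is SSM-recurrent and there exists $i\in[n]$ with $c_i=2$. Consequently the SSM-recurrent configurations on $W_n$ are exactly the ASM-recurrent ones together with $(1,1,\ldots,1)$.
   Context: $C_n$ is the cycle on $[n]=\{1,\ldots,n\}$ with edges $\{i,i+1\}$ and $\{n,1\}$; $W_n$ is $C_n$ plus a sink vertex $0$ adjacent to all of $[n]$. Indices are taken modulo $n$, vertices $1,\ldots,n$ being arranged clockwise. For $i,j\in[n]$, $(i,j)$ denotes the open clockwise interval: the vertices strictly between $i$ and $j$ when going $i,i+1,i+2,\ldots$ (mod $n$) until $j$; if $i=j$, $(i,j):=[n]\setminus\{i\}$. Sandpile setting: configurations $c\in\mathbb{Z}_{\ge0}^n$ (no grains on the sink), stable if $c_i<\deg(i)$ for all $i\in[n]$ (on $W_n$: $c\in\{0,1,2\}^n$). ASM toppling: an unstable vertex loses $\deg(i)$ grains and sends one to each neighbour (grains to the sink vanish). SSM with parameter $p\in(0,1)$: a toppling vertex sends independently one grain to each neighbour with probability $p$, keeping it otherwise. For each model, the Markov chain on stable configurations adds one grain at a random vertex (fully supported distribution on $[n]$) and stabilises; ASM-/SSM-recurrent configurations are the recurrent states of these chains. Known characterisation: a stable $c$ is ASM-recurrent (resp.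 SSM-recurrent) iff there is an acyclic (resp. arbitrary) orientation $\mathcal O$ of the graph in which $0$ is the unique vertex with all incident edges incoming and with $c_i\ge \mathrm{in}_{\mathcal O}(i)$ for all $i\in[n]$. *)

From mathcomp Require Import all_boot.
From Stdlib Require Import Relations.
Set Implicit Arguments. Unset Strict Implicit. Unset Printing Implicit Defensive.

(* Vertices of the cycle [n] are 'I_n (vertex k+1 of the paper is k : 'I_n),
   clockwise successor of i is ordS i, predecessor ord_pred i.
   The sink 0 is implicit: every cycle vertex is adjacent to it, so every
   vertex of [n] has degree 3 in W_n (n >= 3). *)
Definition config (n : nat) := {ffun 'I_n -> nat}.

Definition deg_W : nat := 3.

Definition stable n (c : config n) : Prop := forall i, c i < deg_W.

Definition add_grain n (c : config n) (i : 'I_n) : config n :=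
  [ffun j => c j + (j == i)].

(* Toppling of vertex i that sends one grain to the counter-clockwise
   neighbour iff bl, to the clockwise neighbour iff br and to the sink iff bs
   (grains sent to the sink vanish); the sent grains are lost by i. *)
Definition topple n (c : config n) (i : 'I_n) (bl br bs : bool) : config n :=
  [ffun j => c j - (if j == i then bl + br + bs else 0)
             + ((j == ord_pred i) && bl) + ((j == ordS i) && br)].

Definition asm_step n (c c' : config n) : Prop :=
  exists i, deg_W <= c i /\ c' = topple c i true true true.

(* SSM toppling: an unstable vertex sends a grain to each neighbour
   independently with probability p in (0,1); as p is in (0,1) every subset
   of neighbours occurs with positive probability. *)
Definition ssm_step n (c c' : config n) : Prop :=
  exists i bl br bs, deg_W <= c i /\ c' = topple c i bl br bs.

Definition stabilises n (step : relation (config n)) (c c' : config n) : Prop :=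
  clos_refl_trans _ step c c' /\ stable c'.

(* One step of the Markov chain: add a grain at some vertex (fully supported
   distribution) and stabilise; this is the support of the transition kernel. *)
Definition chain n (step : relation (config n)) (c c' : config n) : Prop :=
  exists i, stabilises step (add_grain c i) c'.

(* Recurrent state of the finite Markov chain on stable configurations:
   every state reachable from c leads back to c. *)
Definition recurrent n (step : relation (config n)) (c : config n) : Prop :=
  stable c /\
  forall c', clos_refl_trans _ (chain step) c c' ->
             clos_refl_trans _ (chain step) c' c.

Definition ASM_recurrent n (c : config n) := recurrent (@asm_step n) c.
Definition SSM_recurrent n (c : config n) := recurrent (@ssm_step n) c.

Definition cwdist n (a b : 'I_n) : nat := (b + n - a) %% n.

(* k lies in the open clockwise interval (i,j); (i,i) = [n] \ {i}. *)
Definition in_open_interval n (i j k : 'I_n) : Prop :=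
  if i == j then k != i else (0 < cwdist i k) && (cwdist i k < cwdist i j).

Definition all_ones n : config n := [ffun _ => 1].

From mathcomp Require Import all_boot zify.
From Stdlib Require Import Relations.
Set Implicit Arguments. Unset Strict Implicit. Unset Printing Implicit Defensive.

(* A configuration is recurrent iff it is reachable from the maximal configuration (all 2s).
   Reachable configurations dominate the rim in-degrees of an orientation sending every spoke to
   the sink: adding grains keeps this, and a toppling vertex turns the rim edges it fires along
   away from itself. Under the ASM all rim edges are fired, so the rim never becomes a directed
   cycle. Such an orientation puts a vertex of in-degree 2 strictly between any two zeros, and
   somewhere on the rim when it is acyclic. Conversely, separated zeros give an orientation
   (edge k -> k+1 iff the first non-1 after k is a 2), and every such configuration with a 2 is
   ASM-reachable from the maximum: un-firing a zero, possibly with a neighbouring 1, yields an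
   orientable predecessor of smaller potential, and configurations without zeros are reached by
   firing every vertex once. Without a 2, separated zeros force the all-ones configuration,
   which one SSM toppling that withholds a grain reaches. *)

Notation crt R := (clos_refl_trans _ R).

Lemma crt_hom A B (R : relation A) (S : relation B) (f : A -> B) :
  (forall x y, R x y -> S (f x) (f y)) -> forall x y, crt R x y -> crt S (f x) (f y).
Proof.
move=> hRS x y; elim=> [{}x {}y /hRS|{}x|x' y' z _ IHxy _ IHyz]; first exact: rt_step.
  exact: rt_refl.
exact: rt_trans IHxy IHyz.
Qed.

Lemma crt_inv A (R : relation A) (P : A -> Prop) :
  (forall x y, R x y -> P x -> P y) -> forall x y, crt R x y -> P x -> P y.
Proof. by move=> hR x y; elim=> [? ? /hR|//|? ? ? _ IH1 _ IH2 /IH1 /IH2]. Qed.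

Lemma bool_switch (f : nat -> bool) m :
  f 0 -> ~~ f m -> exists2 d, d < m & f d && ~~ f d.+1.
Proof.
elim: m => [->//|m IH] f0 fm; case: (boolP (f m)) => [fm'|/IH [//|d dm hd]].
  by exists m; rewrite ?fm'.
by exists d; first exact: ltnW.
Qed.

Section Cycle.
Variable n : nat.
Implicit Types (i j k : 'I_n) (o : 'I_n -> bool).

Lemma ord_gt0 i : 0 < n.
Proof. exact: leq_ltn_trans (leq0n i) (ltn_ord i). Qed.

Definition cwshift i d := iter d (@ordS n) i.

Lemma val_cwshift i d : val (cwshift i d) = (i + d) %% n.
Proof.
elim: d => [|d IH]; first by rewrite addn0 modn_small.
by rewrite /cwshift iterS /= -/(cwshift i d) IH -addn1 modnDml addn1 addnS.
Qed.

Lemma val_ordS i : val (ordS i) = if i.+1 == n then 0 else i.+1.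
Proof.
by rewrite /=; case: eqP => [->|ne]; rewrite ?modnn // modn_small //; have := ltn_ord i; lia.
Qed.

Lemma val_ord_pred i : val (ord_pred i) = if val i == 0 then n.-1 else i.-1.
Proof.
have := ltn_ord i; rewrite /=; case: eqP => [->|ne] lti; first by rewrite add0n modn_small //; lia.
have -> : (i + n).-1 = i.-1 + n by lia.
by rewrite modnDr modn_small //; lia.
Qed.

Lemma cwshift0 i : cwshift i 0 = i.
Proof. by []. Qed.

Lemma cwshiftS i d : cwshift i d.+1 = ordS (cwshift i d).
Proof. by []. Qed.

Lemma cwshift_pred i d : cwshift (ord_pred i) d.+1 = cwshift i d.
Proof. by rewrite /cwshift iterSr ord_predK. Qed.

Lemma ord_pred_cwshift i : ord_pred i = cwshift i n.-1.
Proof.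
apply: val_inj; rewrite val_cwshift /=; congr (_ %% _).
by have := ltn_ord i; lia.
Qed.

Lemma cwdist_lt i j : cwdist i j < n.
Proof. exact: ltn_pmod (ord_gt0 i). Qed.

Lemma cwdist_cwshift i d : cwdist i (cwshift i d) = d %% n.
Proof.
rewrite /cwdist val_cwshift -addnBA; last exact: ltnW.
rewrite modnDml -addnA (addnC d) addnA subnKC ?modnDl //; exact: ltnW.
Qed.

Lemma cwshift_cwdist i j : cwshift i (cwdist i j) = j.
Proof.
apply: val_inj; rewrite val_cwshift /cwdist modnDmr.
have -> : i + (j + n - i) = j + n by have := ltn_ord i; lia.
by rewrite modnDr modn_small.
Qed.

Lemma eq_cwshift i d1 d2 : d1 < n -> d2 < n -> (cwshift i d1 == cwshift i d2) = (d1 == d2).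
Proof.
move=> lt1 lt2; apply/eqP/eqP => [e|->] //.
by move: (cwdist_cwshift i d1); rewrite e cwdist_cwshift !modn_small.
Qed.

Lemma cwdist_pred i j : cwdist i (ord_pred j) = (if i == j then n else cwdist i j).-1.
Proof.
case: eqP => [<-|/eqP ij].
  by rewrite ord_pred_cwshift cwdist_cwshift modn_small // prednK ?(ord_gt0 i).
have d0 : 0 < cwdist i j.
  by rewrite lt0n; apply: contraNneq ij => d0; rewrite -(cwshift_cwdist i j) d0.
rewrite -{1}(cwshift_cwdist i j) -(prednK d0) /cwshift iterS ordSK -/(cwshift _ _).
by rewrite cwdist_cwshift modn_small // (leq_ltn_trans (leq_pred _) (cwdist_lt i j)).
Qed.

Lemma cwdist_eq0 i k : (cwdist i k == 0) = (k == i).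
Proof.
by rewrite -(eq_cwshift i) ?cwdist_lt ?cwshift_cwdist ?(ord_gt0 i).
Qed.

Lemma in_open_intervalE i j k :
  in_open_interval i j k <-> 0 < cwdist i k < (if i == j then n else cwdist i j).
Proof.
by rewrite /in_open_interval; case: eqP => // _; rewrite cwdist_lt andbT lt0n cwdist_eq0.
Qed.

Lemma cycle_switch o a b :
  o a -> ~~ o b -> exists2 d, d < cwdist a b & o (cwshift a d) && ~~ o (cwshift a d.+1).
Proof.
by move=> oa ob; apply: (@bool_switch (fun d => o (cwshift a d))); rewrite /= ?cwshift_cwdist.
Qed.

Lemma ord_pred_eqE i j : (ord_pred i == j) = (i == ordS j).
Proof. by apply/eqP/eqP => [<-|->]; rewrite ?ord_predK ?ordSK. Qed.

Lemma eq_ord_predE i j : (i == ord_pred j) = (ordS i == j).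
Proof. by rewrite eq_sym ord_pred_eqE eq_sym. Qed.

Section DistinctNeighbours.
Hypothesis n_gt2 : 2 < n.

Lemma ordS_eq_id i : (ordS i == i) = false.
Proof. by rewrite -[ordS i]/(cwshift i 1) -{2}[i]/(cwshift i 0) eq_cwshift //; lia. Qed.

Lemma ordSS_eq_id i : (ordS (ordS i) == i) = false.
Proof. by rewrite -[ordS _]/(cwshift i 2) -{2}[i]/(cwshift i 0) eq_cwshift //; lia. Qed.

Lemma id_eq_ordS i : (i == ordS i) = false.
Proof. by rewrite eq_sym ordS_eq_id. Qed.

Lemma id_eq_ordSS i : (i == ordS (ordS i)) = false.
Proof. by rewrite eq_sym ordSS_eq_id. Qed.

End DistinctNeighbours.
End Cycle.

Arguments cwshift : simpl never.

(* Rewrites equalities between rim neighbours into the form [ordS^k i == j] and decides those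
   that 2 < n settles. *)
Ltac simpl_rim n_gt2 :=
  do 3 rewrite ?ord_predK ?ordSK ?eqxx ?ord_pred_eqE ?eq_ord_predE ?(inj_eq (@ordS_inj _))
    ?(ordS_eq_id n_gt2) ?(id_eq_ordS n_gt2) ?(ordSS_eq_id n_gt2) ?(id_eq_ordSS n_gt2) /=.

Ltac rim_cases j z n_gt2 :=
  let jz := fresh "jz" in let jp := fresh "jp" in let js := fresh "js" in
  case: (eqVneq j z) => [jz|/negbTE jz]; first rewrite ?jz;
  last (case: (eqVneq j (ord_pred z)) => [jp|/negbTE jp]; first rewrite ?jp;
  last (case: (eqVneq j (ordS z)) => [js|/negbTE js]; first rewrite ?js;
        last (rewrite eq_ord_predE in jp; simpl_rim n_gt2; rewrite ?jz ?jp ?js)));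
  simpl_rim n_gt2.

Ltac split_bools o :=
  repeat match goal with
  | |- context [o ?x] => case: (o x)
  | |- context [?x == ?y] => case: (x == y)
  end.

Section Reachability.
Variables (n : nat) (step : relation (config n)).
Notation reach := (crt (chain step)).
Implicit Types c s t : config n.

Definition max_config : config n := [ffun _ => 2].

Lemma stable_le2 c j : stable c -> c j <= 2.
Proof. by move/(_ j). Qed.

Lemma max_config_stable : stable max_config.
Proof. by move=> j; rewrite ffunE. Qed.

Lemma stable_reach c c' : stable c -> reach c c' -> stable c'.
Proof. by move=> + h; apply: crt_inv h => x y [i []]. Qed.

Lemma reach_inv (P : config n -> Prop) :
  (forall c i, P c -> P (add_grain c i)) -> (forall c c', step c c' -> P c -> P c') ->
  forall c c', reach c c' -> P c -> P c'.
Proof.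
move=> Padd Pstep; apply: crt_inv => c c' [i [h _]] /(Padd _ i).
exact: crt_inv h.
Qed.

(* Add the missing grains one at a time: every intermediate configuration lies below [t],
   hence is stable. *)
Lemma reach_le s t : stable t -> (forall j, s j <= t j) -> reach s t.
Proof.
move=> st; move e: (\sum_j (t j - s j)) => m; elim: m s e => [|m IH] s e le.
  suff -> : s = t by apply: rt_refl.
  apply/ffunP => j; apply/eqP; rewrite eqn_leq le /= -subn_eq0.
  by move/eqP: e; rewrite sum_nat_eq0 => /forallP /(_ j).
have [i lti] : exists i, s i < t i.
  apply/existsP; apply: contraPT e => /existsPn nlt.
  by rewrite big1 // => j _; apply/eqP; rewrite subn_eq0 leqNgt nlt.
have le' j : add_grain s i j <= t j by rewrite ffunE; case: eqP => [->|]; rewrite ?addn1 ?addn0.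
apply: rt_trans (rt_step _ _ _ _ _) (IH _ _ le').
  exists i; split; first exact: rt_refl.
  by move=> j; apply: leq_ltn_trans (le' j) (st j).
apply/eqP; rewrite -eqSS -e (bigD1 i) //= [X in _ == X](bigD1 i) //= ffunE eqxx.
under eq_bigr => j /negbTE ji do rewrite ffunE ji addn0.
by rewrite -addSn addn1 subnSK.
Qed.

Lemma recurrentE c : recurrent step c <-> stable c /\ reach max_config c.
Proof.
have below_max c' : stable c' -> forall j, c' j <= max_config j.
  by move=> st j; rewrite ffunE; apply: stable_le2.
split=> [[sc h]|[sc h]].
  by split=> //; apply/h/reach_le; [exact: max_config_stable | exact: below_max].
split=> // c' hc'; apply: rt_trans h; apply: reach_le max_config_stable _.
exact/below_max/(stable_reach sc hc').
Qed.

End Reachability.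

Section Orientations.
Variable n : nat.
Implicit Types (c : config n) (o : 'I_n -> bool) (i k v : 'I_n).

(* An orientation of W_n in which the sink is the unique sink points every spoke towards 0, so it
   is determined by [o : 'I_n -> bool], [o k] meaning that the rim edge {k, k+1} points clockwise.
   Its only possible directed cycle is the rim, so it is acyclic iff [o] is not constant. Spokes
   contribute nothing to in-degrees on [n]. *)
Definition rim_indeg o k : nat := o (ord_pred k) + ~~ o k.

Definition indeg_below o c := forall k, rim_indeg o k <= c k.

Definition ssm_orientable c := exists o, indeg_below o c.

Definition asm_orientable c :=
  exists o, [/\ exists k, o k, exists k, ~~ o k & indeg_below o c].

Lemma asm_orientable_ssm c : asm_orientable c -> ssm_orientable c.
Proof. by case=> o [_ _ h]; exists o. Qed.

Lemma rim_indeg_le2 o k : rim_indeg o k <= 2.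
Proof. by rewrite /rim_indeg; case: (o _); case: (o _). Qed.

Lemma indeg_below_zero o c k :
  indeg_below o c -> c k = 0 -> o (ord_pred k) = false /\ o k = true.
Proof. by move=> /(_ k) + ck; rewrite /rim_indeg ck; case: (o _); case: (o _). Qed.

Lemma indeg_below_two o c k :
  stable c -> indeg_below o c -> o (ord_pred k) -> ~~ o k -> c k = 2.
Proof.
move=> /(_ k) ck /(_ k); rewrite /rim_indeg => hk opk /negbTE ok.
by move: ck hk; rewrite opk ok /deg_W; lia.
Qed.

Lemma indeg_below_add_grain o c i : indeg_below o c -> indeg_below o (add_grain c i).
Proof. by move=> h k; rewrite ffunE (leq_trans (h k)) ?leq_addr. Qed.

(* The rim edges along which [i] fires are turned away from [i]. *)
Definition reorient o i (bl br : bool) k :=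
  if (k == ord_pred i) && bl then false else if (k == i) && br then true else o k.

Lemma indeg_below_topple (n_gt2 : 2 < n) o c i bl br bs : deg_W <= c i ->
  indeg_below o c -> indeg_below (reorient o i bl br) (topple c i bl br bs).
Proof.
move=> ci h k; move: (h k) ci; rewrite /rim_indeg /reorient ffunE /deg_W.
by rim_cases k i n_gt2; case: bl br bs; split_bools o; lia.
Qed.

Lemma ssm_orientable_step (n_gt2 : 2 < n) c c' :
  ssm_step c c' -> ssm_orientable c -> ssm_orientable c'.
Proof.
by case=> i [bl [br [bs [ci ->]]]] [o h]; exists (reorient o i bl br); apply: indeg_below_topple.
Qed.

Lemma asm_orientable_step (n_gt2 : 2 < n) c c' :
  asm_step c c' -> asm_orientable c -> asm_orientable c'.
Proof.
case=> i [ci ->] [o [_ _ h]]; exists (reorient o i true true); split.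
- by exists i; rewrite /reorient; simpl_rim n_gt2.
- by exists (ord_pred i); rewrite /reorient; simpl_rim n_gt2.
- exact: indeg_below_topple.
Qed.

Lemma ssm_orientable_reach (n_gt2 : 2 < n) c :
  crt (chain (@ssm_step n)) (max_config n) c -> ssm_orientable c.
Proof.
move=> h; apply: (reach_inv _ _ h).
- by move=> ? i [o ho]; exists o; apply: indeg_below_add_grain.
- exact: ssm_orientable_step.
- by exists xpredT => k; rewrite ffunE rim_indeg_le2.
Qed.

Lemma asm_orientable_reach (n_gt2 : 2 < n) c :
  crt (chain (@asm_step n)) (max_config n) c -> asm_orientable c.
Proof.
move=> h; apply: (reach_inv _ _ h).
- by move=> ? i [o [o1 o0 ho]]; exists o; split=> //; apply: indeg_below_add_grain.
- exact: asm_orientable_step.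
pose i0 : 'I_n := Ordinal (ltn_trans (isT : 0 < 2) n_gt2).
exists (pred1 i0); split.
- by exists i0 => /=.
- by exists (ordS i0); rewrite /= ordS_eq_id.
- by move=> k; rewrite ffunE rim_indeg_le2.
Qed.

Definition zeros_separated c := forall i j : 'I_n, c i = 0 -> c j = 0 ->
  exists k : 'I_n, in_open_interval i j k /\ c k = 2.

Lemma ssm_orientable_separated c : stable c -> ssm_orientable c -> zeros_separated c.
Proof.
move=> st [o h] i j ci cj.
have [_ oi] := indeg_below_zero h ci; have [opj _] := indeg_below_zero h cj.
have [d ltd /andP [od od']] := cycle_switch oi (negbT opj).
exists (cwshift i d.+1); split; last by apply: indeg_below_two od'; rewrite ?cwshiftS ?ordSK.
apply/in_open_intervalE; rewrite cwdist_cwshift modn_small; move: ltd; rewrite cwdist_pred.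
  by have := cwdist_lt i j; case: eqP => _; lia.
by have := cwdist_lt i j; case: eqP => _; lia.
Qed.

Lemma asm_orientable_two c : stable c -> asm_orientable c -> exists k, c k = 2.
Proof.
move=> st [o [[a oa] [b ob] h]]; have [d _ /andP [od od']] := cycle_switch oa ob.
by exists (cwshift a d.+1); apply: indeg_below_two od'; rewrite ?cwshiftS ?ordSK.
Qed.

Definition two_ahead c k : bool :=
  [exists d : 'I_n, [&& 0 < d, c (cwshift k d) == 2 &
     [forall d' : 'I_n, (0 < d' < d) ==> (c (cwshift k d') == 1)]]].

Lemma two_ahead_pred_one c v : c v = 1 -> two_ahead c (ord_pred v) -> two_ahead c v.
Proof.
move=> cv /existsP [[d ltd] /and3P [/= d0 /eqP c2 /forallP hd]].
case: d ltd d0 c2 hd => [|[|d]] //= ltd _; rewrite cwshift_pred ?cwshift0 ?cv // => c2 hd.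
have ltd' : d.+1 < n by lia.
apply/existsP; exists (Ordinal ltd'); rewrite /= c2.
apply/forallP => d'; apply/implyP => /andP [d0 dd].
have ltd'' : d'.+1 < n by have := ltn_ord d'; lia.
by have := hd (Ordinal ltd''); rewrite /= cwshift_pred ltnS dd.
Qed.

Lemma two_ahead_pred_zero c v : c v = 0 -> ~~ two_ahead c (ord_pred v).
Proof.
move=> cv; apply/existsP => [[[d ltd] /and3P [/= d0 /eqP c2 /forallP hd]]].
case: d ltd d0 c2 hd => [|[|d]] //= ltd _; rewrite cwshift_pred ?cwshift0 ?cv // => _ hd.
have lt1 : 1 < n by lia.
by have := hd (Ordinal lt1); rewrite /= cwshift_pred cwshift0 cv.
Qed.

Lemma two_ahead_zero c v : stable c -> zeros_separated c -> c v = 0 -> two_ahead c v.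
Proof.
move=> st sep cv.
pose Q e := (0 < e < n) && (c (cwshift v e) != 1).
have exQ : exists e, Q e.
  have [k [/in_open_intervalE]] := sep v v cv cv; rewrite eqxx => /andP [k0 kn] ck.
  by exists (cwdist v k); rewrite /Q k0 kn cwshift_cwdist ck.
case: (ex_minnP exQ) => e /andP [/andP [e0 en] ce] emin.
have ce2 : c (cwshift v e) = 2.
  move: ce (stable_le2 (cwshift v e) st); case ce': (c _) => [|[|[|]]] // _ _.
  have [k [/in_open_intervalE]] := sep v (cwshift v e) cv ce'.
  have -> : (v == cwshift v e) = false by rewrite -{1}[v]/(cwshift v 0) eq_cwshift //; lia.
  rewrite cwdist_cwshift modn_small // => /andP [k0 ke] ck.
  by have := emin (cwdist v k); rewrite /Q k0 cwdist_lt cwshift_cwdist ck /=; lia.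
apply/existsP; exists (Ordinal en); rewrite /= e0 ce2 eqxx /=.
apply/forallP => d; apply/implyP => /andP [d0 de].
by have := emin d; rewrite /Q d0 ltn_ord /=; case: eqP => // _ /(_ isT); lia.
Qed.

Lemma separated_ssm_orientable c : stable c -> zeros_separated c -> ssm_orientable c.
Proof.
move=> st sep; exists (two_ahead c) => v; rewrite /rim_indeg.
case cv: (c v) (stable_le2 v st) => [|[|[|]]] // _.
- by rewrite (negbTE (two_ahead_pred_zero cv)) two_ahead_zero.
- case: (boolP (two_ahead c (ord_pred v))) => [h|_]; last by case: (two_ahead c v).
  by rewrite (two_ahead_pred_one cv h).
- exact: rim_indeg_le2.
Qed.

End Orientations.

Section Firing.
Variable n : nat.
Hypothesis n_gt2 : 2 < n.
Implicit Types (c t : config n) (i j v z : 'I_n) (L : seq 'I_n).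

Definition asm_fire c i := topple c i true true true.

Lemma asm_fireE c i j : asm_fire c i j =
  c j - (if j == i then deg_W else 0) + (j == ord_pred i) + (j == ordS i).
Proof. by rewrite ffunE !andbT. Qed.

Lemma asm_fire_balance c i j : deg_W <= c i ->
  asm_fire c i j + 3 * (j == i) = c j + (ordS j == i) + (j == ordS i).
Proof.
rewrite asm_fireE -eq_ord_predE /deg_W; case: (eqVneq j i) => [->|ji]; simpl_rim n_gt2; lia.
Qed.

Fixpoint legal c L : Prop :=
  if L is i :: L' then deg_W <= c i /\ legal (asm_fire c i) L' else True.

Lemma legal_reach c L : legal c L -> crt (@asm_step n) c (foldl asm_fire c L).
Proof.
elim: L c => [|i L IH] c /=; first by move=> _; apply: rt_refl.
by case=> ci /IH; apply: rt_trans; apply: rt_step; exists i.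
Qed.

Lemma legal_balance c L : legal c L -> forall j,
  foldl asm_fire c L j + 3 * count_mem j L =
  c j + count_mem (ord_pred j) L + count_mem (ordS j) L.
Proof.
elim: L c => [|i L IH] c /=; first by move=> _ j; rewrite !addn0.
case=> ci /IH IHL j; move: (IHL j) (asm_fire_balance j ci).
rewrite (eq_sym i j) (eq_sym i (ordS j)) eq_ord_predE (eq_sym (ordS i) j).
by move: (count_mem j _) (count_mem (ord_pred j) _) (count_mem (ordS j) _); lia.
Qed.

Lemma legal_of_counts x0 c L :
  (forall k, k < size L ->
     deg_W + 3 * count_mem (nth x0 L k) (take k L) <=
     c (nth x0 L k) + count_mem (ord_pred (nth x0 L k)) (take k L)
                    + count_mem (ordS (nth x0 L k)) (take k L)) ->
  legal c L.
Proof.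
elim: L c => [//|i L IH] c h /=.
have ci : deg_W <= c i by have := h 0 isT; rewrite /= ?muln0 !addn0.
split=> //; apply: IH => k ltk; have := h k.+1 ltk; rewrite /=.
have := asm_fire_balance (nth x0 L k) ci.
rewrite (eq_sym i) (eq_sym i (ordS _)) eq_ord_predE (eq_sym (ordS i)).
move: (nth x0 L k) => x; move: (count_mem x _) (count_mem (ord_pred x) _) (count_mem (ordS x) _).
by rewrite /deg_W; lia.
Qed.

(* Fire every vertex once, clockwise from [v]. *)
Lemma chain_max_config v : chain (@asm_step n) (max_config n) [ffun j => 1 + (j == v)].
Proof.
pose L := map (cwshift v) (iota 0 n).
have take_L k : k <= n -> take k L = map (cwshift v) (iota 0 k).
  by move=> le_kn; rewrite -map_take take_iota (minn_idPl le_kn).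
have cwshift_inj : {in iota 0 n &, injective (cwshift v)}.
  by move=> a b; rewrite !mem_iota => /= lta ltb /eqP; rewrite eq_cwshift // => /eqP.
have count_L j : count_mem j L = 1.
  rewrite count_uniq_mem ?map_inj_in_uniq ?iota_uniq //; apply/eqP; rewrite eqb1.
  by apply/mapP; exists (cwdist v j); rewrite ?cwshift_cwdist // mem_iota cwdist_lt.
have legal_L : legal (add_grain (max_config n) v) L.
  apply: (@legal_of_counts v) => k; rewrite size_map size_iota => ltk.
  rewrite (nth_map 0) ?size_iota // nth_iota // add0n take_L ?(ltnW ltk) // !ffunE.
  have -> : count_mem (cwshift v k) (map (cwshift v) (iota 0 k)) = 0.
    apply/count_memPn/mapP => [[d]]; rewrite mem_iota /= => ltd /eqP.
    by rewrite eq_cwshift //; [lia | exact: ltn_trans ltk].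
  case: k ltk => [|k] ltk; first by rewrite cwshift0 eqxx.
  suff : 0 < count_mem (ord_pred (cwshift v k.+1)) (map (cwshift v) (iota 0 k.+1)).
    by rewrite /deg_W; lia.
  rewrite -has_count has_pred1 cwshiftS ordSK; apply: map_f.
  by rewrite mem_iota add0n ltnSn.
exists v; split; last by move=> j; rewrite ffunE /deg_W; case: (_ == _).
suff -> : [ffun j => 1 + (j == v)] = foldl asm_fire (add_grain (max_config n) v) L.
  exact: legal_reach.
apply/ffunP => j; move: (legal_balance legal_L j); rewrite !count_L !ffunE.
by move: (foldl _ _ _) => F; move: (F j) (nat_of_bool (j == v)) => x b; lia.
Qed.

End Firing.

Section Mirror.
Variable n : nat.
Implicit Types (c : config n) (i k : 'I_n).

Lemma rev_ordS k : rev_ord (ordS k) = ord_pred (rev_ord k).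
Proof.
apply: val_inj; move: (val_ordS k) (val_ord_pred (rev_ord k)) (ltn_ord k) => /= -> ->.
by case: eqP; case: eqP; lia.
Qed.

Lemma rev_ord_pred k : rev_ord (ord_pred k) = ordS (rev_ord k).
Proof. by rewrite -[in RHS](ord_predK k) rev_ordS ord_predK. Qed.

Definition mirror c : config n := [ffun k => c (rev_ord k)].

Lemma mirrorK : involutive mirror.
Proof. by move=> c; apply/ffunP => k; rewrite !ffunE rev_ordK. Qed.

Lemma mirror_add_grain c i : mirror (add_grain c i) = add_grain (mirror c) (rev_ord i).
Proof. by apply/ffunP => k; rewrite !ffunE (can2_eq rev_ordK rev_ordK). Qed.

Lemma mirror_topple c i bl br bs :
  mirror (topple c i bl br bs) = topple (mirror c) (rev_ord i) br bl bs.
Proof.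
apply/ffunP => k; rewrite !ffunE !(can2_eq rev_ordK rev_ordK) rev_ord_pred rev_ordS.
by rewrite (addnC bl) addnAC.
Qed.

Lemma mirror_chain c c' : chain (@asm_step n) c c' -> chain (@asm_step n) (mirror c) (mirror c').
Proof.
case=> i [h st]; exists (rev_ord i); split; last by move=> k; rewrite ffunE.
rewrite -mirror_add_grain; apply: crt_hom h => x y [j [xj ->]].
by exists (rev_ord j); rewrite mirror_topple ffunE rev_ordK.
Qed.

Lemma mirror_ssm_orientable c : ssm_orientable c -> ssm_orientable (mirror c).
Proof.
case=> o h; exists (fun k => ~~ o (ord_pred (rev_ord k))) => k.
by rewrite ffunE; have := h (rev_ord k); rewrite /rim_indeg rev_ord_pred ordSK negbK addnC.
Qed.

End Mirror.

(* Chosen so that un-firing lowers the potential: [unfire] trades 5 for 2 + 2 and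
   [unfire_pair] trades 5 + 2 for at most 3 + 3. *)
Definition weight (x : nat) : nat := if x is 0 then 5 else if x is 1 then 2 else 0.

Definition potential n (c : config n) := \sum_j weight (c j).

Lemma potential_mirror n (c : config n) : potential (mirror c) = potential c.
Proof.
rewrite /potential (reindex_inj rev_ord_inj) /=.
by apply: eq_bigr => j _; rewrite ffunE rev_ordK.
Qed.

Lemma potential_lt n (c c' : config n) (A B : 'I_n -> nat) :
  (forall j, weight (c' j) + A j <= weight (c j) + B j) -> \sum_j B j < \sum_j A j ->
  potential c' < potential c.
Proof.
move=> le_cc' lt_BA; rewrite -(ltn_add2r (\sum_j A j)).
have : potential c' + \sum_j A j <= potential c + \sum_j B j.
  by rewrite -!big_split; apply: leq_sum => j _.
by move/leq_ltn_trans; apply; rewrite ltn_add2l.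
Qed.

Lemma sum_eq1 n (i : 'I_n) : \sum_j (j == i : nat) = 1.
Proof. by rewrite (bigD1 i) //= eqxx big1 // => j /negbTE ->. Qed.

Section Descent.
Variable n : nat.
Hypothesis n_gt2 : 2 < n.
Implicit Types (t : config n) (o : 'I_n -> bool) (j z : 'I_n).

Definition admissible t := [/\ stable t, ssm_orientable t & exists v, t v = 2].

Definition descends t :=
  exists t', [/\ admissible t', potential t' < potential t & chain (@asm_step n) t' t].

Lemma descends_mirror t : descends t -> descends (mirror t).
Proof.
case=> t' [[st' or' [v t'v]] lt' ch']; exists (mirror t'); split.
- split; [by move=> j; rewrite ffunE | exact: mirror_ssm_orientable | ].
  by exists (rev_ord v); rewrite ffunE rev_ordK.
- by rewrite !potential_mirror.
- exact: mirror_chain.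
Qed.

(* Undo the firing of [z]. *)
Definition unfire t z : config n :=
  [ffun j => if j == z then 2 else if (j == ord_pred z) || (j == ordS z) then 1 else t j].

Lemma descends_unfire o t z : stable t -> indeg_below o t ->
  t z = 0 -> t (ord_pred z) = 2 -> t (ordS z) = 2 -> descends t.
Proof.
move=> st h tz tp ts; have [opz oz] := indeg_below_zero h tz.
exists (unfire t z); split; first split.
- move=> j; rewrite ffunE; case: ifP => // _; case: ifP => // _; exact: st.
- exists (fun k => if k == ord_pred z then true else if k == z then false else o k) => j.
  have := h j; rewrite /rim_indeg ffunE; rim_cases j z n_gt2; by do 2?case: (o _).
- by exists z; rewrite ffunE eqxx.
- apply: (@potential_lt _ _ _ (fun j => 5 * (j == z))
                             (fun j => 2 * (j == ord_pred z) + 2 * (j == ordS z))).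
    move=> j; rewrite ffunE; rim_cases j z n_gt2; rewrite ?tz ?tp ?ts //.
  by rewrite big_split /= -!big_distrr /= !sum_eq1.
- exists z; split; last exact: st.
  apply: rt_step; exists z; split; first by rewrite !ffunE eqxx.
  apply/ffunP => j; rewrite !ffunE; rim_cases j z n_gt2; by rewrite ?tz ?tp ?ts ?addn0 ?subn0.
Qed.

(* Undo the firing of [ord_pred z] followed by that of [z]. *)
Definition unfire_pair t z : config n :=
  [ffun j => if j == z then 2 else if j == ord_pred z then 2
             else t j - (j == ord_pred (ord_pred z)) - (j == ordS z)].

Lemma descends_unfire_pair o t z : stable t -> indeg_below o t ->
  t z = 0 -> t (ord_pred z) = 1 -> descends t.
Proof.
move=> st h tz tp; have [opz oz] := indeg_below_zero h tz.
have oppz : o (ord_pred (ord_pred z)) = false.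
  by move: (h (ord_pred z)); rewrite /rim_indeg tp opz; case: (o _).
have ppz_out j : (j == ord_pred (ord_pred z)) <= ~~ o j by case: eqP => [->|]; rewrite ?oppz.
have sz_in j : (j == ordS z) <= o (ord_pred j) by case: eqP => [->|]; rewrite ?ordSK ?oz.
have spent j : (j == ord_pred (ord_pred z)) + (j == ordS z) <= t j.
  by apply: (leq_trans _ (h j)); rewrite /rim_indeg [leqRHS]addnC; apply: leq_add.
exists (unfire_pair t z); split; first split.
- move=> j; rewrite ffunE; case: ifP => // _; case: ifP => // _.
  by rewrite -subnDA; apply: leq_ltn_trans (leq_subr _ _) (st j).
- exists (fun k => if k == ord_pred (ord_pred z) then true else if k == z then false else o k) => j.
  move: (h j) (ppz_out j) (sz_in j); rewrite /rim_indeg ffunE; rim_cases j z n_gt2;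
  by split_bools o; lia.
- by exists z; rewrite ffunE eqxx.
- apply: (@potential_lt _ _ _ (fun j => 5 * (j == z) + 2 * (j == ord_pred z))
                             (fun j => 3 * (j == ord_pred (ord_pred z)) + 3 * (j == ordS z))).
    move=> j; move: (st j) (spent j); rewrite ffunE; rim_cases j z n_gt2; rewrite ?tz ?tp //;
    by case: (t _) => [|[|[|?]]]; split_bools o; rewrite /deg_W /weight /= ?muln0.
  by rewrite big_split [X in _ < X]big_split /= -!big_distrr /= !sum_eq1.
- exists (ord_pred z); split; last exact: st.
  apply: rt_trans (rt_step _ _ _ _ _) (rt_step _ _ _ _ _).
    by exists (ord_pred z); rewrite !ffunE; simpl_rim n_gt2.
  exists z; split; first by rewrite !ffunE; simpl_rim n_gt2.
  apply/ffunP => j; move: (spent j); rewrite !ffunE; rim_cases j z n_gt2; rewrite ?tz ?tp;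
  by split_bools o; lia.
Qed.

Lemma descends_zero t z : admissible t -> t z = 0 -> descends t.
Proof.
case=> st [o h] _ tz; have [opz oz] := indeg_below_zero h tz.
have tp_gt0 : 0 < t (ord_pred z).
  by apply: leq_trans (h _); rewrite /rim_indeg opz addn1.
have ts_gt0 : 0 < t (ordS z) by apply: leq_trans (h _); rewrite /rim_indeg ordSK oz.
have [tp|tp] := eqVneq (t (ord_pred z)) 1; first exact: descends_unfire_pair h tz tp.
have [ts|ts] := eqVneq (t (ordS z)) 1.
  (* the mirror image of the previous case *)
  have [o' h'] := mirror_ssm_orientable (ex_intro _ o h).
  rewrite -[t]mirrorK; apply: descends_mirror.
  apply: (@descends_unfire_pair o' _ (rev_ord z) _ h'); first by move=> j; rewrite ffunE.
    by rewrite ffunE rev_ordK.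
  by rewrite ffunE rev_ord_pred rev_ordK.
have two x : 0 < t x -> t x != 1 -> t x = 2.
  by move: (stable_le2 x st); case: (t x) => [|[|[|]]].
exact: descends_unfire h tz (two _ tp_gt0 tp) (two _ ts_gt0 ts).
Qed.

Lemma reach_admissible t : admissible t -> crt (chain (@asm_step n)) (max_config n) t.
Proof.
have [m] := ubnP (potential t); elim: m t => // m IH t lt_tm adm.
have [z /eqP tz|nz] := pickP (fun z => t z == 0).
  have [t' [adm' lt' ch']] := descends_zero adm tz.
  exact: rt_trans (IH _ (leq_trans lt' lt_tm) adm') (rt_step _ _ _ _ ch').
case: adm => st _ [v tv]; apply: rt_trans (rt_step _ _ _ _ (chain_max_config n_gt2 v)) _.
apply: reach_le => // j; rewrite ffunE; have := nz j.
have [->|_] := eqVneq j v; first by rewrite tv.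
by rewrite /= lt0n => /negbT.
Qed.

End Descent.

Section Recurrence.
Variable n : nat.
Hypothesis n_gt2 : 2 < n.
Implicit Types c : config n.

Lemma reach_asm_ssm c c' :
  crt (chain (@asm_step n)) c c' -> crt (chain (@ssm_step n)) c c'.
Proof.
apply: (crt_hom (f := id)) => {}c {}c' [i [h st]]; exists i; split=> //.
by apply: (crt_hom (f := id)) h => x y [j [xj ->]]; exists j, true, true, true.
Qed.

Lemma all_ones_stable : stable (all_ones n).
Proof. by move=> j; rewrite ffunE. Qed.

(* Add a grain to the 2 of the admissible configuration 2, 0, 1, ..., 1 and topple it
   withholding the grain of its counterclockwise neighbour. *)
Lemma reach_all_ones : crt (chain (@ssm_step n)) (max_config n) (all_ones n).
Proof.
have k : 'I_n := Ordinal (ltn_trans (isT : 0 < 2) n_gt2).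
pose t : config n := [ffun j => if j == k then 2 else if j == ordS k then 0 else 1].
have adm : admissible t.
  split; last by exists k; rewrite ffunE eqxx.
    by move=> j; rewrite ffunE; case: ifP => // _; case: ifP.
  by exists (fun j => j != k) => j; rewrite /rim_indeg ffunE; rim_cases j k n_gt2.
apply: rt_trans (reach_asm_ssm (reach_admissible n_gt2 adm)) (rt_step _ _ _ _ _).
exists k; split; last exact: all_ones_stable.
apply: rt_step; exists k, false, true, true; split; first by rewrite !ffunE eqxx.
by apply/ffunP => j; rewrite !ffunE; rim_cases j k n_gt2.
Qed.

Lemma separated_all_ones c :
  stable c -> zeros_separated c -> (forall v, c v != 2) -> c = all_ones n.
Proof.
move=> st sep no2; apply/ffunP => j; rewrite ffunE.
case cj: (c j) (stable_le2 j st) (no2 j) => [|[|[|]]] //= _ _.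
by have [k [_ /eqP]] := sep j j cj cj; rewrite (negbTE (no2 k)).
Qed.

Lemma ssm_recurrentE c : stable c -> SSM_recurrent c <-> zeros_separated c.
Proof.
move=> st; rewrite /SSM_recurrent recurrentE; split=> [[_ reach_c]|sep].
  exact: ssm_orientable_separated st (ssm_orientable_reach n_gt2 reach_c).
split=> //; case: (pickP (fun v => c v == 2)) => [v /eqP cv|no2].
  apply/reach_asm_ssm/(reach_admissible n_gt2).
  by split=> //; [exact: separated_ssm_orientable | exists v].
rewrite (separated_all_ones st sep); first exact: reach_all_ones.
by move=> v; rewrite no2.
Qed.

Lemma asm_recurrentE c : stable c ->
  ASM_recurrent c <-> SSM_recurrent c /\ exists i, c i = 2.
Proof.
move=> st; rewrite ssm_recurrentE // /ASM_recurrent recurrentE.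
split=> [[_ reach_c]|[sep two]].
  have orient := asm_orientable_reach n_gt2 reach_c.
  split; first exact: ssm_orientable_separated st (asm_orientable_ssm orient).
  exact: asm_orientable_two st orient.
by split=> //; apply: (reach_admissible n_gt2); split=> //; exact: separated_ssm_orientable.
Qed.

End Recurrence.

Theorem mainTheorem3 (n : nat) (hn : 3 <= n) (c : config n) (hc : stable c) :
  (SSM_recurrent c <->
     (forall i j : 'I_n, c i = 0 -> c j = 0 ->
        exists k : 'I_n, in_open_interval i j k /\ c k = 2)) /\
  (ASM_recurrent c <-> SSM_recurrent c /\ exists i : 'I_n, c i = 2) /\
  (SSM_recurrent c <-> ASM_recurrent c \/ c = all_ones n).
Proof.
have ssmE := ssm_recurrentE hn hc; have asmE := asm_recurrentE hn hc.
split; first exact: ssmE.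
split; first exact: asmE.
split=> [ssm|[/asmE [] //|->]].
  case: (pickP (fun v => c v == 2)) => [v /eqP cv|no2].
    by left; apply/asmE; split=> //; exists v.
  right; apply: separated_all_ones => //; first exact/ssmE.
  by move=> v; rewrite no2.
by have [_] := ssm_recurrentE hn (@all_ones_stable n); apply => i j; rewrite ffunE.
Qed.
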